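(* Consider the following random variables, all defined on a common probability space (one draw from a superpopulation): a binary decision (plan) variable $P\in\{0,1\}$; a binary treatment at time 2, $A_2\in\{0,1\}$; real-valued outcomes $Y_1, Y_2$ with finite expectations; and, for $p^*,a^*\in\{0,1\}$, potential outcomes $Y_1^{p=p^*}, Y_2^{p=p^*}$, $A_2^{p=p^*}$ (values had $P$ been set to $p^*$), $Y_2^{a_2=a^*}$ (value of $Y_2$ had $A_2$ been set to $a^*$), and $Y_2^{p=p^*,a_2=a^*}$ (value of $Y_2$ had $P$ been set to $p^*$ and $A_2^{p=p^*}$ been set to $a^*$). Suppose that: (i) $\Pr(A_2=a^* )>0$ for every $a^*\in\{0,1\}$; (ii) $A_2^{p=p^*}=p^*$ for every $p^*\in\{0,1\}$; (iii) $\mathbb{E}(Y_2^{p=0}-Y_1^{p=0}\mid P=1)=\mathbb{E}(Y_2^{p=0}-Y_1^{p=0}\mid P=0)$; (iv) for each $p^*\in\{0,1\}$: $Y_1^{p=p^*}=Y_1$, $Y_2^{p=p^*}=Y_2$ and $A_2^{p=p^*}=A_2$ on the event $\{P=p^*\}$; (v) $\mathbb{E}(Y_2^{p=p^*,a_2=a^*}\mid P=p')=\mathbb{E}(Y_2^{a_2=a^*}\mid P=p')$ for every $p^*,a^*,p'\in\{0,1\}$. Then \[\{\mathbb{E}(Y_2\mid A_2=1)-\mathbb{E}(Y_1\mid A_2=1)\}-\{\mathbb{E}(Y_2\mid A_2=0)-\mathbb{E}(Y_1\mid A_2=0)\}=ATT_{A_2}-\psi,\] where $ATT_{A_2}=\mathbb{E}(Y_2^{a_2=1}-Y_2^{a_2=0}\mid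 A_2=1)$ and $\psi=\mathbb{E}(Y_1^{p=1}\mid P=1)-\mathbb{E}(Y_1^{p=0}\mid P=1)$.
   Context: Difference-in-differences setting with two time points. Superscripts denote potential outcomes (counterfactual values under a hypothetical intervention fixing the indicated variable(s)); in the joint intervention $Y_2^{p=p^*,a_2=a^*}$, $P$ is set to $p^*$ and the treatment $A_2^{p=p^*}$ is then set to $a^*$. $P$ represents the decision/plan to implement a policy, $A_2$ its implementation at time 2 (no unit is treated at time 1), and $Y_1,Y_2$ the outcome measured at times 1 and 2. *)

From HB Require Import structures.
From mathcomp Require Import all_boot all_order all_algebra.
From mathcomp Require Import all_classical all_reals all_analysis.
Set Implicit Arguments. Unset Strict Implicit. Unset Printing Implicit Defensive.
Import Order.TTheory GRing.Theory Num.Theory.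
Local Open Scope classical_set_scope.
Local Open Scope ring_scope.

Definition condE d (T : measurableType d) (R : realType)
  (Pr : probability T R) (X : T -> R) (B : set T) : R :=
  fine (\int[Pr]_(w in B) (X w)%:E) / fine (Pr B).

Definition int_rv d (T : measurableType d) (R : realType)
  (Pr : probability T R) (X : T -> R) : Prop :=
  measurable_fun setT X /\ Pr.-integrable setT (EFin \o X).

From HB Require Import structures.
From mathcomp Require Import all_boot all_order all_algebra.
From mathcomp Require Import all_classical all_reals all_analysis.
Import Order.TTheory GRing.Theory Num.Theory.
Local Open Scope classical_set_scope.
Local Open Scope ring_scope.

(* Since A2 = P (the plan is implemented exactly as decided), the observed
   difference-in-differences compares the two plan arms.  Consistency turns
   each observed conditional mean into one of potential outcomes; in the
   treated arm, setting the plan and then implementing it is the same as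
   setting the treatment, and in the untreated arm parallel trends (iii)
   transports the untreated trend to the treated arm.  What remains is ATT
   minus the anticipation effect psi of the plan on the time-1 outcome. *)

Section ConditionalMean.
Variables (d : measure_display) (T : measurableType d) (R : realType).
Variable Pr : probability T R.

Lemma eq_condE (X Y : T -> R) (B : set T) :
  (forall w, B w -> X w = Y w) -> condE Pr X B = condE Pr Y B.
Proof.
move=> eqXY; rewrite /condE; congr (fine _ / _); apply: eq_integral => w.
by rewrite inE => /eqXY ->.
Qed.

Lemma condEB (X Y : T -> R) (B : set T) : measurable B ->
  Pr.-integrable B (EFin \o X) -> Pr.-integrable B (EFin \o Y) ->
  condE Pr (fun w => X w - Y w) B = condE Pr X B - condE Pr Y B.
Proof.
move=> mB iX iY; rewrite /condE.
under eq_integral do rewrite EFinB.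
by rewrite integralB_EFin // fineB ?mulrBl //; exact: integrable_fin_num.
Qed.

Lemma int_rv_integrable (X : T -> R) (B : set T) : measurable B ->
  int_rv Pr X -> Pr.-integrable B (EFin \o X).
Proof. by move=> mB [_ iX]; exact: integrableS iX. Qed.

End ConditionalMean.

(* Binary values 0/1 are encoded as false/true. *)
Theorem proposition1 (d : measure_display) (T : measurableType d) (R : realType)
  (Pr : probability T R)
  (P A2 : T -> bool) (Y1 Y2 : T -> R)
  (Y1p Y2p : bool -> T -> R) (A2p : bool -> T -> bool)
  (Y2a : bool -> T -> R) (Y2pa : bool -> bool -> T -> R) :
  (forall b, measurable [set w | P w = b]) ->
  (forall b, measurable [set w | A2 w = b]) ->
  int_rv Pr Y1 -> int_rv Pr Y2 ->
  (forall p, int_rv Pr (Y1p p)) -> (forall p, int_rv Pr (Y2p p)) ->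
  (forall a, int_rv Pr (Y2a a)) -> (forall p a, int_rv Pr (Y2pa p a)) ->
  (* composition: setting A2^{p=p*} to its own (deterministic) value p* is no intervention *)
  (forall p w, Y2pa p p w = Y2p p w) ->
  (* (i) *)
  (forall a, (0 < Pr [set w | A2 w = a])%E) ->
  (* (ii) *)
  (forall p w, A2p p w = p) ->
  (* (iii) *)
  condE Pr (fun w => Y2p false w - Y1p false w) [set w | P w = true] =
  condE Pr (fun w => Y2p false w - Y1p false w) [set w | P w = false] ->
  (* (iv) *)
  (forall p w, P w = p -> [/\ Y1p p w = Y1 w, Y2p p w = Y2 w & A2p p w = A2 w]) ->
  (* (v) *)
  (forall p a p', condE Pr (Y2pa p a) [set w | P w = p'] =
                  condE Pr (Y2a a) [set w | P w = p']) ->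
  let ATT := condE Pr (fun w => Y2a true w - Y2a false w) [set w | A2 w = true] in
  let psi := condE Pr (Y1p true) [set w | P w = true]
             - condE Pr (Y1p false) [set w | P w = true] in
  (condE Pr Y2 [set w | A2 w = true] - condE Pr Y1 [set w | A2 w = true])
  - (condE Pr Y2 [set w | A2 w = false] - condE Pr Y1 [set w | A2 w = false])
  = ATT - psi.
Proof.
move=> mP _ iY1 iY2 iY1p iY2p iY2a _ compose _ A2p_det trends consistent
  joint_eq_single ATT psi; rewrite {}/ATT {}/psi.
have -> : A2 = P.
  by apply: funext => w; have [_ _ <-] := consistent (P w) w erefl; rewrite A2p_det.
have Y1_obs p : condE Pr Y1 [set w | P w = p] = condE Pr (Y1p p) [set w | P w = p].
  by apply: eq_condE => w /consistent[].
have Y2_obs p : condE Pr Y2 [set w | P w = p] = condE Pr (Y2p p) [set w | P w = p].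
  by apply: eq_condE => w /consistent[].
have Y2a_treated a :
    condE Pr (Y2a a) [set w | P w = true] = condE Pr (Y2p a) [set w | P w = true].
  by rewrite -(joint_eq_single a a true); apply: eq_condE => w _; exact: compose.
have untreated_trend :
    condE Pr Y2 [set w | P w = false] - condE Pr Y1 [set w | P w = false] =
    condE Pr (Y2p false) [set w | P w = true] - condE Pr (Y1p false) [set w | P w = true].
  by rewrite Y2_obs Y1_obs -!condEB ?int_rv_integrable.
rewrite untreated_trend condEB ?int_rv_integrable //.
rewrite Y2_obs Y1_obs !Y2a_treated.
by rewrite !opprB addrACA [RHS]addrACA [X in _ + X]addrC.
Qed.
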